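(* Let $\lambda$ be a nonzero real number and $n$ a positive integer. Then, for real $x$, $$(1+x)F_{n,\lambda}(x)=\sum_{k=1}^{n+1}S_{2,\lambda}(n+1,k)(k-1)!\,x^{k}+n\lambda\sum_{k=1}^{n}S_{2,\lambda}(n,k)(k-1)!\,x^{k}.$$ Moreover, $$\int_{0}^{x}\frac{F_{n+1,\lambda}(t)}{t}\,dt+n\lambda\int_{0}^{x}\frac{F_{n,\lambda}(t)}{t}\,dt=(1+x)F_{n,\lambda}(x).$$
   Context: For real $y$ and integer $k\ge0$: $(y)_{0,\lambda}=1$, $(y)_{k,\lambda}=y(y-\lambda)\cdots(y-(k-1)\lambda)$; $(y)_0=1$, $(y)_k=y(y-1)\cdots(y-k+1)$. The degenerate exponential is $e_\lambda(t)=\sum_{k\ge0}(1)_{k,\lambda}t^k/k!=(1+\lambda t)^{1/\lambda}$. The degenerate Stirling numbers of the second kind are defined by $(x)_{n,\lambda}=\sum_{k=0}^{n}S_{2,\lambda}(n,k)(x)_{k}$ ($n\ge0$). The degenerate Fubini polynomials are defined by $\frac{1}{1-x(e_\lambda(t)-1)}=\sum_{n\ge0}F_{n,\lambda}(x)\frac{t^n}{n!}$; equivalently $F_{n,\lambda}(x)=\sum_{k=0}^{n}S_{2,\lambda}(n,k)k!\,x^k$. *)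

From Stdlib Require Import Reals Lra Lia Factorial.
From Coquelicot Require Import Coquelicot.
Open Scope R_scope.

Fixpoint dfall (y lam : R) (k : nat) : R :=
  match k with
  | O => 1
  | S k' => dfall y lam k' * (y - INR k' * lam)
  end.

Definition fall (y : R) (k : nat) : R := dfall y 1 k.

(* degenerate Stirling numbers of the second kind S_{2,lam}(n,k), given by the
   recurrence  S(n+1,k) = S(n,k-1) + (k - n lam) S(n,k),  S(0,0)=1,
   S(0,k+1)=0, S(n+1,0)=0, which is equivalent to the defining expansion
   (x)_{n,lam} = sum_{k=0}^n S(n,k) (x)_k  (see lemma S2_def below). *)
Fixpoint S2 (lam : R) (n k : nat) : R :=
  match n, k with
  | O, O => 1
  | O, S _ => 0
  | S _, O => 0
  | S n', S k' => S2 lam n' k' + (INR (S k') - INR n' * lam) * S2 lam n' (S k')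
  end.

Definition Fub (lam : R) (n : nat) (x : R) : R :=
  sum_n (fun k => S2 lam n k * INR (fact k) * x ^ k) n.

Lemma S2_high lam n k : (n < k)%nat -> S2 lam n k = 0.
Proof.
  revert k; induction n as [|n IH]; intros [|k] H; simpl; try lia; try reflexivity.
  rewrite IH by lia. rewrite IH by lia. ring.
Qed.

Lemma sum_shift (a : nat -> R) n :
  sum_f_R0 a (S n) = a 0%nat + sum_f_R0 (fun k => a (S k)) n.
Proof.
  induction n as [|n IH]; simpl in *. ring. rewrite IH. ring.
Qed.

Lemma S2_def (lam x : R) (n : nat) :
  dfall x lam n = sum_n (fun k => S2 lam n k * fall x k) n.
Proof.
  rewrite sum_n_Reals.
  induction n as [|n IH]. simpl. unfold fall; simpl. ring.
  simpl dfall. rewrite IH. rewrite sum_shift. simpl S2 at 1.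
  rewrite Rmult_0_l, Rplus_0_l.
  rewrite Rmult_comm, scal_sum.
  transitivity (sum_f_R0 (fun k => S2 lam n k * fall x (S k)) n
               + sum_f_R0 (fun k => (INR k - INR n * lam) * S2 lam n k * fall x k) n).
  { rewrite <- plus_sum. apply sum_eq. intros i _.
    unfold fall; simpl. ring. }
  transitivity (sum_f_R0 (fun k => S2 lam n k * fall x (S k)) n
               + sum_f_R0 (fun k => (INR (S k) - INR n * lam) * S2 lam n (S k) * fall x (S k)) n).
  { f_equal. destruct n as [|m].
    - simpl. ring.
    - rewrite sum_shift. simpl S2 at 1. simpl INR at 1.
      rewrite tech5. rewrite (S2_high lam (S m) (S (S m))) by lia.
      simpl S2 at 1. rewrite Rmult_0_r, Rmult_0_l, Rplus_0_l, Rmult_0_r, Rmult_0_l, Rplus_0_r.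
      reflexivity. }
  rewrite <- plus_sum. apply sum_eq. intros i _.
  change (S2 lam (S n) (S i)) with (S2 lam n i + (INR (S i) - INR n * lam) * S2 lam n (S i)). ring.
Qed.

(** Writing [S(n,k)] for [S2 lam n k], the recurrence
    [S(n+1,k) = S(n,k-1) + (k - n lam) S(n,k)] settles the first identity
    coefficientwise: [x F_n(x)] supplies the [S(n,k-1)] part, the [n lam] term
    cancels the [- n lam] of the recurrence, and [k (k-1)! = k!] leaves the
    coefficient [S(n,k) k!] of [F_n(x)].  For the second, [S(m,0) = 0] when
    [m >= 1], so [F_m(t)/t] is a polynomial whose antiderivative vanishing at [0]
    is [G_m(x) = sum_{k=1}^m S(m,k) (k-1)! x^k]; the integrals are [G_(n+1)(x)]
    and [G_n(x)], and the first identity reads [(1+x) F_n = G_(n+1) + n lam G_n]. *)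
From Stdlib Require Import Reals Factorial Lra Lia.
From Coquelicot Require Import Coquelicot.
Open Scope R_scope.

Lemma sum_n_m_Sm_zero (u : nat -> R) (n m : nat) :
  (n <= S m)%nat -> u (S m) = 0 -> sum_n_m u n (S m) = sum_n_m u n m.
Proof.
  intros Hnm Hu. rewrite sum_n_Sm, Hu by exact Hnm.
  apply (plus_zero_r (G := R_AbelianMonoid)).
Qed.

Lemma is_RInt_pow_pred (k : nat) (a b : R) : (1 <= k)%nat ->
  is_RInt (fun t => INR k * t ^ (k - 1)) a b (b ^ k - a ^ k).
Proof.
  intros Hk.
  apply (is_RInt_derive (V := R_CompleteNormedModule) (fun t => t ^ k)).
  - intros t _. auto_derive; [easy|].
    replace (k - 1)%nat with (Init.Nat.pred k) by lia. ring.
  - intros t _. apply (ex_derive_continuous (K := R_AbsRing) (V := R_NormedModule)).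
    auto_derive. easy.
Qed.

Lemma is_RInt_sum_deriv_monomials (a : nat -> R) (m : nat) (x : R) :
  is_RInt (fun t => sum_n_m (fun k => a k * INR k * t ^ (k - 1)) 1 m) 0 x
          (sum_n_m (fun k => a k * x ^ k) 1 m).
Proof.
  induction m as [|m IH].
  - rewrite sum_n_m_zero by lia.
    apply (is_RInt_ext (fun _ => 0)).
    + intros t _. rewrite sum_n_m_zero by lia. reflexivity.
    + replace (zero : R) with (scal (x - 0) (0 : R)) by apply Rmult_0_r.
      apply (is_RInt_const (V := R_NormedModule)).
  - rewrite sum_n_Sm by lia.
    pose proof (is_RInt_scal _ _ _ (a (S m)) _ (is_RInt_pow_pred (S m) 0 x ltac:(lia))) as Hterm.
    rewrite pow_i, Rminus_0_r in Hterm by lia.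
    refine (is_RInt_ext _ _ _ _ _ _ (is_RInt_plus _ _ _ _ _ _ IH Hterm)).
    intros t _. rewrite sum_n_Sm by lia. unfold plus, scal; simpl. unfold mult; simpl. ring.
Qed.

Definition Fub_primitive (lam : R) (m : nat) (x : R) : R :=
  sum_n_m (fun k => S2 lam m k * INR (fact (k - 1)) * x ^ k) 1 m.

Lemma Fub_sum_from_1 (lam : R) (m : nat) (x : R) : (1 <= m)%nat ->
  Fub lam m x = sum_n_m (fun k => S2 lam m k * INR (fact k) * x ^ k) 1 m.
Proof.
  intros Hm. unfold Fub, sum_n. rewrite sum_Sn_m by lia.
  destruct m as [|m]; [lia|]. cbn [S2]. unfold plus; simpl. ring.
Qed.

Lemma x_mul_Fub (lam : R) (m : nat) (x : R) :
  x * Fub lam m x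
  = sum_n_m (fun k => S2 lam m (k - 1) * INR (fact (k - 1)) * x ^ k) 1 (S m).
Proof.
  unfold Fub, sum_n. rewrite <- sum_n_m_S, <- (sum_n_m_mult_l (K := R_Ring)).
  apply sum_n_m_ext. intros k. rewrite Nat.sub_succ, Nat.sub_0_r.
  unfold mult; simpl. ring.
Qed.

Lemma Fub_div_eq_sum (lam : R) (m : nat) (t : R) : (1 <= m)%nat -> t <> 0 ->
  Fub lam m t / t
  = sum_n_m (fun k => S2 lam m k * INR (fact (k - 1)) * INR k * t ^ (k - 1)) 1 m.
Proof.
  intros Hm Ht. rewrite Fub_sum_from_1 by exact Hm.
  assert (Hfactor :
    sum_n_m (fun k => S2 lam m k * INR (fact k) * t ^ k) 1 m
    = t * sum_n_m (fun k => S2 lam m k * INR (fact (k - 1)) * INR k * t ^ (k - 1)) 1 m).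
  { rewrite <- (sum_n_m_mult_l (K := R_Ring)). apply sum_n_m_ext_loc.
    intros [|j] Hj; [lia|]. rewrite Nat.sub_succ, Nat.sub_0_r.
    cbn [fact pow]. rewrite mult_INR. unfold mult, plus; simpl. ring. }
  rewrite Hfactor. field. exact Ht.
Qed.

(* The integrand is only evaluated on the open interval, so the value of [Fub lam m 0 / 0]
   plays no role. *)
Lemma RInt_Fub_div (lam : R) (m : nat) (x : R) : (1 <= m)%nat ->
  RInt (fun t => Fub lam m t / t) 0 x = Fub_primitive lam m x.
Proof.
  intros Hm. apply is_RInt_unique.
  refine (is_RInt_ext _ _ _ _ _ _
            (is_RInt_sum_deriv_monomials (fun k => S2 lam m k * INR (fact (k - 1))) m x)).
  intros t Ht. rewrite Fub_div_eq_sum; [reflexivity | exact Hm |].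
  destruct (Rle_dec 0 x);
    [rewrite Rmin_left, Rmax_right in Ht | rewrite Rmin_right, Rmax_left in Ht]; lra.
Qed.

Lemma one_plus_x_mul_Fub (lam : R) (n : nat) (x : R) : (1 <= n)%nat ->
  (1 + x) * Fub lam n x = Fub_primitive lam (S n) x + INR n * lam * Fub_primitive lam n x.
Proof.
  intros Hn. unfold Fub_primitive.
  rewrite Rmult_plus_distr_r, Rmult_1_l, x_mul_Fub, Fub_sum_from_1 by exact Hn.
  rewrite <- (sum_n_m_Sm_zero (fun k => S2 lam n k * INR (fact k) * x ^ k)),
          <- (sum_n_m_Sm_zero (fun k => S2 lam n k * INR (fact (k - 1)) * x ^ k))
    by (lia || (rewrite S2_high by lia; ring)).
  rewrite <- (sum_n_m_mult_l (K := R_Ring)).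
  rewrite <- !(sum_n_m_plus (G := R_AbelianMonoid)).
  apply sum_n_m_ext_loc. intros [|j] Hj; [lia|]. rewrite Nat.sub_succ, Nat.sub_0_r.
  cbn [S2 fact]. rewrite mult_INR, S_INR. unfold mult, plus; simpl. ring.
Qed.

Theorem theorem13 (lam : R) (n : nat) (hlam : lam <> 0) (hn : (1 <= n)%nat) :
  (forall x : R,
     (1 + x) * Fub lam n x =
     sum_n_m (fun k => S2 lam (S n) k * INR (fact (k - 1)) * x ^ k) 1 (S n)
     + INR n * lam * sum_n_m (fun k => S2 lam n k * INR (fact (k - 1)) * x ^ k) 1 n)
  /\
  (forall x : R,
     RInt (fun t => Fub lam (S n) t / t) 0 x
     + INR n * lam * RInt (fun t => Fub lam n t / t) 0 x
     = (1 + x) * Fub lam n x).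
Proof.
  split; intros x.
  - exact (one_plus_x_mul_Fub lam n x hn).
  - rewrite !RInt_Fub_div by lia. symmetry. exact (one_plus_x_mul_Fub lam n x hn).
Qed.
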